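(* Let $k\ge1$ and let $B\in\mathfrak{gl}_n(\mathbb C)$ satisfy $B[B,B^*]=-B$, $B^k\ne0$, $B^{k+1}=0$. Let $\mathbb C^n=V_0\oplus\cdots\oplus V_k$ be an orthogonal decomposition with $V_0=\ker B$, $B(V_i)\subset V_{i-1}$ for $1\le i\le k$, and such that $E_i:=\mathrm{Pr}_{V_{i-1}}B|_{V_i}$ satisfy $E_i^*E_i-E_{i+1}E_{i+1}^*=\mathrm{Id}_{V_i}$ for $1\le i<k$ and $E_k^*E_k=\mathrm{Id}_{V_k}$ (such a decomposition exists). Then there is an orthonormal basis of $\mathbb C^n$ subordinate to this splitting in which $B$ is represented by the block matrix whose only nonzero blocks are $\Sigma_i\in\mathbb C^{\dim V_{i-1}\times\dim V_i}$ in block position $(i-1,i)$, $1\le i\le k$, where each $\Sigma_i$ has nonzero entries only on its main diagonal, these entries $\sigma_{ij}:=(\Sigma_i)_{jj}$ ($1\le j\le\dim V_i$) being positive reals given recursively by $$\sigma_{ij}=\begin{cases}\sqrt{1+\sigma_{(i+1)j}^2},& i<k,\ 1\le j\le\dim V_{i+1},\\ 1,& i<k,\ \dim V_{i+1}<j\le\dim V_i,\\ 1,& i=k,\ 1\le j\le\dim V_k.\end{cases}$$ In particular this matrix representation is uniquely determined by the numbers $\dim V_i$, and hence only by the Jordan decomposition of $B$.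
   Context: $\mathbb C^n$ carries the standard Hermitian inner product; $^*$ denotes adjoint, $\mathrm{Pr}_V$ orthogonal projection onto $V$, $[X,Y]=XY-YX$. A basis is subordinate to the splitting if it is a union of bases of the $V_i$, listed in order $V_0,V_1,\dots,V_k$. *)

From HB Require Import structures.
From mathcomp Require Import all_boot all_order all_algebra.
From mathcomp Require Import complex reals.
Set Implicit Arguments. Unset Strict Implicit. Unset Printing Implicit Defensive.
Import Order.TTheory GRing.Theory Num.Theory.
Local Open Scope ring_scope.

(* A linear subspace V of C^n is
   represented (mxalgebra style) by a matrix whose ROW space is
   { x^T | x in V }, i.e. a column vector x lies in V iff (x^T <= V)%MS. *)

Definition mxadj (C : numClosedFieldType) m n (A : 'M[C]_(m, n)) : 'M[C]_(n, m) :=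
  (map_mx (fun x => x^*) A)^T.

Definition is_orth_proj (C : numClosedFieldType) n (V P : 'M[C]_n) : Prop :=
  [/\ mxadj P = P, P *m P = P & (P^T == V)%MS].

Definition blk_off (d : nat -> nat) (i : nat) : nat := \sum_(l < i) d l.

(* sigma_aux d m i j: the number sigma_{i,j+1} (j is 0-based) when m = k - i *)
Fixpoint sigma_aux (C : numClosedFieldType) (d : nat -> nat) (m i j : nat) : C :=
  match m with
  | 0 => 1
  | m'.+1 => if (j < d i.+1)%N then sqrtC (1 + (sigma_aux C d m' i.+1 j) ^+ 2)
             else 1
  end.

(* sigma d k i j = sigma_{i,(j+1)} of the paper (0-based column index j) *)
Definition sigma (C : numClosedFieldType) (d : nat -> nat) (k i j : nat) : C :=
  sigma_aux C d (k - i) i j.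

(* the normal-form matrix: only nonzero blocks Sigma_i at block position
   (i-1, i), 1 <= i <= k, with Sigma_i diagonal with entries sigma_{i,j} *)
Definition normal_form (C : numClosedFieldType) (n k : nat) (d : nat -> nat)
  : 'M[C]_n :=
  \matrix_(r < n, c < n)
    \sum_(i < k)
      (if [&& (blk_off d i.+1 <= c < blk_off d i.+1 + d i.+1)%N,
              (blk_off d i <= r < blk_off d i + d i)%N &
              (r - blk_off d i == c - blk_off d i.+1)%N]
       then sigma C d k i.+1 (c - blk_off d i.+1) else 0).

From HB Require Import structures.
From mathcomp Require Import all_boot all_order all_algebra.
From mathcomp Require Import complex reals.
From mathcomp Require Import sesquilinear spectral zify ring.
Set Implicit Arguments. Unset Strict Implicit. Unset Printing Implicit Defensive.
Import Order.TTheory GRing.Theory Num.Theory.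
Local Open Scope ring_scope.

(* Vectors are rows: x lies in V_i iff (x <= V i)%MS, and B x is x *m B^T.
   Going down from V_k, build for each i an orthonormal basis f_i1, ..., f_id_i
   of V_i made of eigenvectors of E_i^* E_i with eigenvalues sigma_ij^2 (for
   i = k any orthonormal basis will do, as E_k^* E_k = Id).  The vectors
   B f_ij / sigma_ij are then orthonormal in V_(i-1); extend them to an
   orthonormal basis f_(i-1)j of V_(i-1).  Since E_(i-1)^* E_(i-1) = Id + E_i E_i^*
   on V_(i-1), the new vectors are again eigenvectors: with eigenvalue
   1 + sigma_ij^2 = sigma_(i-1)j^2 for j <= d_i, and with eigenvalue 1 for
   j > d_i, because E_i^* f_(i-1)j is then orthogonal to all the f_ij, hence 0.
   Listing the f_ij block by block gives U, and B f_ij = sigma_ij f_(i-1)j is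
   exactly the normal form. *)

Section Adjoint.
Variable C : numClosedFieldType.

Lemma mxadjE m n (A : 'M[C]_(m, n)) : mxadj A = (A ^t* )%sesqui.
Proof. by rewrite /mxadj map_trmx. Qed.

Lemma mxadjM m n p (A : 'M[C]_(m, n)) (B : 'M[C]_(n, p)) :
  mxadj (A *m B) = mxadj B *m mxadj A.
Proof. by rewrite /mxadj map_mxM trmx_mul. Qed.

Lemma mxadjK m n (A : 'M[C]_(m, n)) : mxadj (mxadj A) = A.
Proof. by apply/matrixP => i j; rewrite /mxadj !mxE conjCK. Qed.

Lemma mxadjZ m n a (A : 'M[C]_(m, n)) : mxadj (a *: A) = a^* *: mxadj A.
Proof. by apply/matrixP => i j; rewrite /mxadj !mxE rmorphM. Qed.

Lemma mxadj0 m n : mxadj (0 : 'M[C]_(m, n)) = 0.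
Proof. by apply/matrixP => i j; rewrite /mxadj !mxE conjC0. Qed.

Lemma mxadj_tr m n (A : 'M[C]_(m, n)) : mxadj A^T = map_mx (fun x => x^*) A.
Proof. by rewrite /mxadj map_trmx trmxK. Qed.

Lemma tr_mxadj m n (A : 'M[C]_(m, n)) : (mxadj A)^T = map_mx (fun x => x^*) A.
Proof. exact: trmxK. Qed.

Lemma mul_adj_entry m n p (A : 'M[C]_(m, n)) (B : 'M[C]_(p, n)) i j :
  (A *m mxadj B) i j = (row i A *m mxadj (row j B)) 0 0.
Proof. by rewrite !mxE; apply: eq_bigr => l _; rewrite /mxadj !mxE. Qed.

Lemma mul_adj_self_eq0 n (x : 'rV[C]_n) : x *m mxadj x = 0 -> x = 0.
Proof.
move=> xx0; apply/eqP; apply: contraT => /dotmx_is_dotmx.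
by rewrite dotmxE -mxadjE xx0 mxE ltxx.
Qed.

Lemma orth_submx m1 m2 p1 p2 n (A : 'M[C]_(m1, n)) (B : 'M[C]_(m2, n))
    (x : 'M[C]_(p1, n)) (y : 'M[C]_(p2, n)) :
  A *m mxadj B = 0 -> (x <= A)%MS -> (y <= B)%MS -> x *m mxadj y = 0.
Proof.
move=> AB0 /submxP[a ->] /submxP[b ->].
by rewrite mxadjM mulmxA -(mulmxA a) AB0 mulmx0 mul0mx.
Qed.

Lemma submx_orth_eq0 m n (A : 'M[C]_(m, n)) (x : 'rV[C]_n) :
  (x <= A)%MS -> x *m mxadj A = 0 -> x = 0.
Proof.
move=> xA xA0; apply: mul_adj_self_eq0; exact: orth_submx xA0 (submx_refl x) xA.
Qed.

Lemma mxrank_orth_sum (I : finType) n (V : I -> 'M[C]_n) :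
  (forall i j, i != j -> V i *m mxadj (V j) = 0) ->
  (\sum_i V i == 1%:M)%MS -> (\sum_i \rank (V i))%N = n.
Proof.
move=> Vorth Vfull; have Vdirect : mxdirect (\sum_i V i).
  apply/mxdirect_sumsP => i _; apply/eqP/rowV0P => v.
  rewrite sub_capmx => /andP[vVi vV']; apply: submx_orth_eq0 vVi _.
  apply/sub_kermxP; apply: submx_trans vV' _.
  by apply/sumsmx_subP => j ji; apply/sub_kermxP; apply: Vorth.
by rewrite -(mxdirectP Vdirect) (eqmx_rank Vfull) mxrank1.
Qed.

Lemma orth_proj_id n (V P : 'M[C]_n) p (x : 'M[C]_(p, n)) :
  is_orth_proj V P -> (x <= V)%MS -> x *m P^T = x.
Proof.
case=> _ PP /eqmxP PV; rewrite -PV => /submxP[a ->].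
by rewrite -mulmxA -trmx_mul PP.
Qed.

Lemma orth_proj_conj n (V P : 'M[C]_n) :
  is_orth_proj V P -> map_mx (fun x => x^*) P = P^T.
Proof. by case=> Padj _ _; rewrite -{2}Padj /mxadj trmxK. Qed.

Lemma orth_proj_sub n (V P : 'M[C]_n) p (x : 'M[C]_(p, n)) :
  is_orth_proj V P -> (x *m P^T <= V)%MS.
Proof. by case=> _ _ /eqmxP <-; rewrite submxMl. Qed.

Lemma mxadj_mul_unitary n (U : 'M[C]_n) : U^T \is unitarymx -> mxadj U *m U = 1%:M.
Proof.
by rewrite trmx_unitary -trmxC_unitary mxadjE => /unitarymxP; rewrite trmxCK.
Qed.

End Adjoint.

Section OrthonormalFamily.
Variable C : numClosedFieldType.
Variable n : nat.
Implicit Types (f g : nat -> 'rV[C]_n) (r s : nat).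

Definition orthonormal_fam r f := forall j j', (j < r)%N -> (j' < r)%N ->
  f j *m mxadj (f j') = (j == j')%:R%:M.

Definition fam_mx r f : 'M[C]_(r, n) := \matrix_(j < r) f j.

Definition fam_cat r f g j := if (j < r)%N then f j else g (j - r)%N.

Definition row_fam m (S : 'M[C]_(m, n)) j :=
  if insub j is Some i then row i S else 0.

Lemma row_famE m (S : 'M[C]_(m, n)) (i : 'I_m) : row_fam S i = row i S.
Proof. by rewrite /row_fam valK. Qed.

Lemma fam_mx_sub p (W : 'M[C]_(p, n)) r f :
  (forall j, (j < r)%N -> (f j <= W)%MS) -> (fam_mx r f <= W)%MS.
Proof. by move=> fW; apply/row_subP => j; rewrite rowK fW. Qed.

Lemma fam_mx_unitary r f : orthonormal_fam r f -> fam_mx r f \is unitarymx.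
Proof.
move=> fON; apply/unitarymxP; rewrite -mxadjE; apply/matrixP => i j.
by rewrite mul_adj_entry !rowK fON // !mxE.
Qed.

Lemma orthonormal_fam_rows m (S : 'M[C]_(m, n)) :
  S \is unitarymx -> orthonormal_fam m (row_fam S).
Proof.
move=> /unitarymxP SS j j' jm j'm.
rewrite -[j]/(val (Ordinal jm)) -[j']/(val (Ordinal j'm)) !row_famE.
by rewrite [LHS]mx11_scalar -mul_adj_entry mxadjE SS !mxE.
Qed.

Lemma orthonormal_fam_cat r s f g : orthonormal_fam r f -> orthonormal_fam s g ->
  (forall j j', (j < r)%N -> (j' < s)%N -> g j' *m mxadj (f j) = 0) ->
  orthonormal_fam (r + s) (fam_cat r f g).
Proof.
move=> fON gON gf j j' js j's; rewrite /fam_cat.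
have fg i i' : (i < r)%N -> (i' < s)%N -> f i *m mxadj (g i') = 0.
  by move=> ir i's; rewrite -[f i]mxadjK -mxadjM gf // mxadj0.
case: (ltnP j r) => jr; case: (ltnP j' r) => j'r.
- exact: fON.
- have j'_s : (j' - r < s)%N by lia.
  have /negbTE-> : j != j' by apply/eqP; lia.
  by rewrite fg ?raddf0.
- have j_s : (j - r < s)%N by lia.
  have /negbTE-> : j != j' by apply/eqP; lia.
  by rewrite gf ?raddf0.
- have j_s : (j - r < s)%N by lia.
  have j'_s : (j' - r < s)%N by lia.
  by rewrite gON // eqn_sub2rE.
Qed.

Lemma orthonormal_fam_eq0 p (W : 'M[C]_(p, n)) r f (x : 'rV[C]_n) :
  orthonormal_fam r f -> (forall j, (j < r)%N -> (f j <= W)%MS) -> \rank W = r ->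
  (x <= W)%MS -> (forall j, (j < r)%N -> x *m mxadj (f j) = 0) -> x = 0.
Proof.
move=> fON fW rW xW xf; have Wf : (W <= fam_mx r f)%MS.
  rewrite -(geq_leqif (mxrank_leqif_sup (fam_mx_sub fW))) rW.
  by rewrite (mxrank_unitary (fam_mx_unitary fON)).
apply: submx_orth_eq0 (submx_trans xW Wf) _.
apply/matrixP => i j; rewrite (ord1 i) [RHS]mxE.
transitivity ((x *m mxadj (f j)) 0 0); last by rewrite xf ?mxE.
by rewrite !mxE; apply: eq_bigr => l _; rewrite /mxadj !mxE.
Qed.

Lemma orthonormal_fam_extend p (W : 'M[C]_(p, n)) r g :
  orthonormal_fam r g -> (forall j, (j < r)%N -> (g j <= W)%MS) ->
  exists2 h,
    orthonormal_fam (\rank W) h /\ (forall j, (j < \rank W)%N -> (h j <= W)%MS) &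
    (r <= \rank W)%N /\ (forall j, (j < r)%N -> h j = g j).
Proof.
(* Complete g by a Gram-Schmidt basis of W :&: g^perp, of rank >= \rank W - r. *)
move=> gON gW; set G := fam_mx r g.
have rG : \rank G = r by apply: mxrank_unitary; apply: fam_mx_unitary.
have gG i : (i < r)%N -> (g i <= G)%MS.
  by move=> ir; rewrite -[g i](rowK (fun j : 'I_r => g j) (Ordinal ir)) row_sub.
have rW : (r <= \rank W)%N by rewrite -rG mxrankS ?fam_mx_sub.
set K := kermx (mxadj G); set X := (W :&: K)%MS.
have rX : (\rank W - r <= \rank X)%N.
  have := mxrank_sum_cap W K; have := rank_leq_col (W + K)%MS.
  have := rank_leq_col G; rewrite mxrank_ker mxadjE mxrank_map mxrank_tr rG -/X; lia.
set S := schmidt (row_base X).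
have S_unitary : S \is unitarymx by apply: schmidt_unitarymx; apply: rank_leq_col.
have SX : (S <= X)%MS by rewrite eqmx_schmidt_free ?row_base_free ?eq_row_base.
have SG : S *m mxadj G = 0 by apply/sub_kermxP; apply: submx_trans SX (capmxSr _ _).
have SW t : (t < \rank X)%N -> (row_fam S t <= W)%MS.
  move=> tX; rewrite -[t]/(val (Ordinal tX)) row_famE.
  exact: submx_trans (row_sub _ _) (submx_trans SX (capmxSl _ _)).
exists (fam_cat r g (row_fam S)); last by split=> // j jr; rewrite /fam_cat jr.
split=> [j j' jW j'W | j jW].
  apply: (orthonormal_fam_cat gON (orthonormal_fam_rows S_unitary)); try lia.
  move=> i t ir tX; apply: (orth_submx SG _ (gG i ir)).
  by rewrite -[t]/(val (Ordinal tX)) row_famE row_sub.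
by rewrite /fam_cat; case: ltnP => jr; [apply: gW | apply: SW; lia].
Qed.

End OrthonormalFamily.

Section Sigma.
Variables (C : numClosedFieldType) (d : nat -> nat) (k : nat).

Lemma sigma_gt0 i j : 0 < sigma C d k i j.
Proof.
suff aux_gt0 m i' : 0 < sigma_aux C d m i' j by apply: aux_gt0.
elim: m i' => [|m IHm] i' /=; first exact: ltr01.
case: ifP => _; last exact: ltr01.
by rewrite sqrtC_gt0 (lt_le_trans ltr01) // lerDl exprn_ge0 // ltW.
Qed.

Lemma sigma_top j : sigma C d k k j = 1.
Proof. by rewrite /sigma subnn. Qed.

Lemma sqr_sigma_pred i j : (1 <= i <= k)%N ->
  sigma C d k i.-1 j ^+ 2 = if (j < d i)%N then 1 + sigma C d k i j ^+ 2 else 1.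
Proof.
move=> /andP[i_gt0 ik]; rewrite /sigma (_ : k - i.-1 = (k - i).+1)%N; last by lia.
by rewrite /= prednK //; case: ifP; rewrite ?sqrtCK ?expr1n.
Qed.

End Sigma.

Section Blocks.
Variable d : nat -> nat.

Definition in_blk i c := (blk_off d i <= c < blk_off d i + d i)%N.

Lemma blk_offS i : blk_off d i.+1 = (blk_off d i + d i)%N.
Proof. by rewrite /blk_off big_ord_recr. Qed.

Lemma leq_blk_off i i' : (i <= i')%N -> (blk_off d i <= blk_off d i')%N.
Proof. by move=> ii'; rewrite /blk_off -(subnKC ii') big_split_ord leq_addr. Qed.

Lemma in_blk_inj i i' c : in_blk i c -> in_blk i' c -> i = i'.
Proof.
wlog ii' : i i' / (i < i')%N.
  move=> wlog_ii'; case: (ltngtP i i') => [|i'i ci ci'|//]; first exact: wlog_ii'.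
  by rewrite (wlog_ii' i' i).
move=> /andP[_ ci] /andP[ci' _]; have := leq_blk_off ii'; rewrite blk_offS; lia.
Qed.

Lemma in_blk_exists m c : (c < blk_off d m)%N -> exists2 i, (i < m)%N & in_blk i c.
Proof.
elim: m => [|m IHm]; first by rewrite /blk_off big_ord0.
case: (ltnP c (blk_off d m)) => [/IHm[i im ci] _|cm cm1]; first by exists i; lia.
by exists m; rewrite // /in_blk cm -blk_offS.
Qed.

End Blocks.

Section NormalFormEntries.
Variables (C : numClosedFieldType) (n k : nat) (d : nat -> nat).

Lemma normal_formE (r c : 'I_n) i : (1 <= i <= k)%N -> in_blk d i c ->
  normal_form C n k d r c =
  if in_blk d i.-1 r && (r - blk_off d i.-1 == c - blk_off d i)%N
  then sigma C d k i (c - blk_off d i) else 0.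
Proof.
move=> /andP[i_gt0 ik] ci; have i'k : (i.-1 < k)%N by lia.
rewrite mxE (bigD1 (Ordinal i'k)) //= big1 ?addr0.
  by rewrite prednK //; move: (ci); rewrite /in_blk => ->.
move=> i' i'i; rewrite ifF //; apply/negP => /and3P[ci' _ _].
move/eqP: i'i; apply; apply: val_inj => /=; have := in_blk_inj ci' ci; lia.
Qed.

Lemma normal_form_blk0 (r c : 'I_n) : in_blk d 0 c -> normal_form C n k d r c = 0.
Proof.
move=> c0; rewrite mxE big1 // => i' _; rewrite ifF //.
by apply/negP => /and3P[ci' _ _]; have := in_blk_inj ci' c0.
Qed.

End NormalFormEntries.

Section NormalFormColumns.
Variables (C : numClosedFieldType) (n k : nat) (d : nat -> nat) (m : nat).
Variable w : 'I_n -> 'rV[C]_m.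

Lemma normal_form_col (c r0 : 'I_n) i : (1 <= i <= k)%N -> in_blk d i c ->
  in_blk d i.-1 r0 -> (r0 = blk_off d i.-1 + (c - blk_off d i) :> nat)%N ->
  \sum_r normal_form C n k d r c *: w r = sigma C d k i (c - blk_off d i) *: w r0.
Proof.
move=> ik ci r0i r0E; rewrite (bigD1 r0) //= big1 ?addr0.
  by rewrite (normal_formE _ _ ik ci) r0i r0E addKn eqxx.
move=> r rr0; rewrite (normal_formE _ _ ik ci); case: ifP => [/andP[ri /eqP rE]|_].
  by case/eqP: rr0; apply: val_inj => /=; move: ri; rewrite /in_blk r0E; lia.
by rewrite scale0r.
Qed.

Lemma normal_form_col0 (c : 'I_n) : in_blk d 0 c ->
  \sum_r normal_form C n k d r c *: w r = 0.
Proof. by move=> c0; rewrite big1 // => r _; rewrite normal_form_blk0 ?scale0r. Qed.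

End NormalFormColumns.

Section SigmaBases.
Variables (C : numClosedFieldType) (n k : nat) (B : 'M[C]_n) (V P : nat -> 'M[C]_n).
Hypothesis Pproj : forall i, (i <= k)%N -> is_orth_proj (V i) (P i).
Hypothesis BV : forall i, (1 <= i <= k)%N -> (V i *m B^T <= V i.-1)%MS.
Hypothesis EE_mid : forall i, (1 <= i < k)%N ->
  mxadj (P i.-1 *m B *m P i) *m (P i.-1 *m B *m P i)
  - (P i *m B *m P i.+1) *m mxadj (P i *m B *m P i.+1) = P i.
Hypothesis EE_top : mxadj (P k.-1 *m B *m P k) *m (P k.-1 *m B *m P k) = P k.

Let d l : nat := \rank (V l).
Let sg := sigma C d k.
Let E i := P i.-1 *m B *m P i.

(* E 0 is junk (0.-1 = 0): no eigenvalue condition is imposed on V_0. *)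
Definition sigma_basis i (f : nat -> 'rV[C]_n) :=
  [/\ orthonormal_fam (d i) f, forall j, (j < d i)%N -> (f j <= V i)%MS &
      (0 < i)%N -> forall j, (j < d i)%N ->
        f j *m (mxadj (E i) *m E i)^T = sg i j ^+ 2 *: f j].

Lemma mulmx_trBE i p (x : 'M[C]_(p, n)) : (1 <= i <= k)%N -> (x <= V i)%MS ->
  x *m B^T = x *m (E i)^T.
Proof.
move=> ik xV; have i'k : (i.-1 <= k)%N by lia.
rewrite /E !trmx_mul !mulmxA (orth_proj_id (Pproj _) xV); last by case/andP: ik.
by rewrite (orth_proj_id (Pproj i'k)) // (submx_trans (submxMr _ xV) (BV ik)).
Qed.

Lemma EE_pred i : (2 <= i <= k)%N ->
  mxadj (E i.-1) *m E i.-1 = P i.-1 + E i *m mxadj (E i).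
Proof.
move=> ik; have i'k : (1 <= i.-1 < k)%N by lia.
have := EE_mid i'k; rewrite prednK; last by lia.
by move=> <-; rewrite subrK.
Qed.

Lemma sigma_basis_top : exists f, sigma_basis k f.
Proof.
have [//|//|h [hON hV] _] := orthonormal_fam_extend (W := V k) (r := 0) (g := fun=> 0).
exists h; split=> // _ j jk.
rewrite /E EE_top (orth_proj_id (Pproj (leqnn k))) ?hV //.
by rewrite /sg sigma_top expr1n scale1r.
Qed.

Section Descent.
Variables (i : nat) (F : nat -> 'rV[C]_n).
Hypotheses (ik : (1 <= i <= k)%N) (Fbasis : sigma_basis i F).

Lemma orthonormal_image :
  orthonormal_fam (d i) (fun j => (sg i j)^-1 *: (F j *m B^T)).
Proof.
have [FON FV FE] := Fbasis; move=> j j' jd j'd.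
have FBB : (F j *m B^T) *m mxadj (F j' *m B^T) = sg i j ^+ 2 *: (j == j')%:R%:M.
  rewrite !(mulmx_trBE ik) ?FV // mxadjM mxadj_tr mulmxA -(mulmxA (F j)).
  by rewrite -tr_mxadj -trmx_mul FE -?scalemxAl ?FON //; case/andP: ik.
rewrite mxadjZ -scalemxAl -scalemxAr scalerA FBB scalerA.
case: eqP => [<-|_]; last by rewrite raddf0 scaler0.
rewrite geC0_conj ?invr_ge0 ?ltW ?sigma_gt0 // -[RHS]scale1r; congr (_ *: _).
by field; rewrite gt_eqF ?sigma_gt0.
Qed.

Lemma adjE_eq0 (x : 'rV[C]_n) :
  (forall j, (j < d i)%N -> x *m mxadj (F j *m B^T) = 0) ->
  x *m map_mx (fun z => z^*) (E i) = 0.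
Proof.
have [FON FV _] := Fbasis; have i_k : (i <= k)%N by case/andP: ik.
move=> xF; apply: (orthonormal_fam_eq0 FON FV (erefl _)).
  rewrite /E !map_mxM (orth_proj_conj (Pproj i_k)) mulmxA.
  exact: orth_proj_sub (Pproj i_k).
move=> j jd; rewrite -mulmxA -mxadj_tr -mxadjM -(mulmx_trBE ik (FV j jd)).
exact: xF.
Qed.

Lemma sigma_basis_pred : exists2 h, sigma_basis i.-1 h &
  (d i <= d i.-1)%N /\ forall j, (j < d i)%N -> F j *m B^T = sg i j *: h j.
Proof.
have [FON FV FE] := Fbasis; have i'k : (i.-1 <= k)%N by lia.
have i_gt0 : (0 < i)%N by case/andP: ik.
pose g j := (sg i j)^-1 *: (F j *m B^T).
have gV j : (j < d i)%N -> (g j <= V i.-1)%MS.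
  by move=> jd; rewrite scalemx_sub // (submx_trans (submxMr _ (FV j jd)) (BV ik)).
have [h [hON hV] [dd hg]] := orthonormal_fam_extend orthonormal_image gV.
have Fh j : (j < d i)%N -> F j *m B^T = sg i j *: h j.
  by move=> jd; rewrite hg // /g scalerA divff ?scale1r // gt_eqF ?sigma_gt0.
exists h => //; split=> // i'_gt0 j jd.
rewrite EE_pred; last by lia.
rewrite linearD /= mulmxDr (orth_proj_id (Pproj i'k) (hV j jd)) trmx_mul tr_mxadj.
rewrite /sg sqr_sigma_pred //; case: ifP => jdi; last first.
  rewrite mulmxA adjE_eq0 ?mul0mx ?addr0 ?scale1r // => j0 j0d.
  rewrite Fh // mxadjZ -scalemxAr hON //; last by lia.
  by rewrite (_ : j == j0 = false) ?raddf0 ?scaler0 //; apply/eqP; lia.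
have hE : h j *m map_mx (fun z => z^*) (E i) = sg i j *: F j.
  rewrite hg // /g -scalemxAl (mulmx_trBE ik (FV j jdi)) -mulmxA -tr_mxadj -trmx_mul.
  by rewrite FE // scalerA; congr (_ *: _); field; rewrite gt_eqF ?sigma_gt0.
rewrite mulmxA hE -scalemxAl -(mulmx_trBE ik (FV j jdi)) Fh //.
by rewrite scalerA scalerDl scale1r expr2.
Qed.

End Descent.

Lemma sigma_bases : exists F : nat -> nat -> 'rV[C]_n,
  (forall i, (i <= k)%N -> sigma_basis i (F i)) /\
  (forall i, (1 <= i <= k)%N -> (d i <= d i.-1)%N /\
     forall j, (j < d i)%N -> F i j *m B^T = sg i j *: F i.-1 j).
Proof.
suff descend m : (m <= k)%N -> exists F : nat -> nat -> 'rV[C]_n,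
    (forall i, (k - m <= i <= k)%N -> sigma_basis i (F i)) /\
    (forall i, (k - m < i <= k)%N -> (d i <= d i.-1)%N /\
       forall j, (j < d i)%N -> F i j *m B^T = sg i j *: F i.-1 j).
  by have [F] := descend k (leqnn k); rewrite subnn; exists F.
elim: m => [_|m IHm mk].
  have [f fbasis] := sigma_basis_top; exists (fun=> f).
  by rewrite subn0; split=> i ik; [rewrite (_ : i = k) //|]; lia.
have [F [Fbasis FB]] := IHm (ltnW mk).
have top : (1 <= k - m <= k)%N by lia.
have Fkm : sigma_basis (k - m) (F (k - m)%N) by apply: Fbasis; lia.
have [h hbasis [dd Fh]] := sigma_basis_pred top Fkm.
exists (fun l => if l == (k - m).-1 then h else F l); split=> i ik.
  by case: eqP => [->|/eqP ne] //; apply: Fbasis; lia.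
rewrite (_ : i == (k - m).-1 = false) /=; last by apply/eqP; lia.
case: (i =P (k - m)%N) => [->|ne]; first by rewrite eqxx.
rewrite (_ : i.-1 == (k - m).-1 = false); last by apply/eqP; lia.
by apply: FB; lia.
Qed.

End SigmaBases.

Section Stacking.
Variables (C : numClosedFieldType) (n k : nat) (V : nat -> 'M[C]_n).
Variable F : nat -> nat -> 'rV[C]_n.
Let d l : nat := \rank (V l).
Hypothesis Vorth : forall i j, (i <= k)%N -> (j <= k)%N -> i != j ->
  V i *m mxadj (V j) = 0.
Hypothesis Vfull : (\sum_(i < k.+1) V i == 1%:M)%MS.
Hypothesis F_ON : forall i, (i <= k)%N -> orthonormal_fam (d i) (F i).
Hypothesis F_sub : forall i j, (i <= k)%N -> (j < d i)%N -> (F i j <= V i)%MS.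

Definition stack_row c :=
  \sum_(i < k.+1) if in_blk d i c then F i (c - blk_off d i)%N else 0.

Definition stack_mx : 'M[C]_n := \matrix_(c < n) stack_row c.

Lemma stack_rowE i c : (i <= k)%N -> in_blk d i c ->
  stack_row c = F i (c - blk_off d i)%N.
Proof.
move=> ik ci; rewrite /stack_row (bigD1 (Ordinal (ik : i < k.+1)%N)) //= ci.
rewrite big1 ?addr0 //.
move=> i' i'i; rewrite ifF //; apply/negP => ci'.
by case/eqP: i'i; apply: val_inj; exact: in_blk_inj ci' ci.
Qed.

Lemma blk_off_full : blk_off d k.+1 = n.
Proof.
have Vorth' (i j : 'I_k.+1) : i != j -> V i *m mxadj (V j) = 0.
  move=> ij; apply: Vorth; [exact: ltn_ord i | exact: ltn_ord j |].
  by apply: contra ij => /eqP ij; apply/eqP/val_inj.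
rewrite /blk_off /d; exact: mxrank_orth_sum Vorth' Vfull.
Qed.

Lemma in_blk_ord (c : 'I_n) : exists2 i, (i <= k)%N & in_blk d i c.
Proof.
by have [|i ik ci] := @in_blk_exists d k.+1 c; [rewrite blk_off_full | exists i].
Qed.

Lemma stack_row_sub i c : (i <= k)%N -> in_blk d i c -> (stack_row c <= V i)%MS.
Proof.
by move=> ik ci; rewrite (stack_rowE ik ci) F_sub //; move: ci; rewrite /in_blk; lia.
Qed.

Lemma stack_mx_unitary : stack_mx \is unitarymx.
Proof.
apply/unitarymxP; rewrite -mxadjE; apply/matrixP => c c'.
rewrite mul_adj_entry !rowK [RHS]mxE.
have [i ik ci] := in_blk_ord c; have [i' i'k ci'] := in_blk_ord c'.
rewrite (stack_rowE ik ci) (stack_rowE i'k ci').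
have [ii'|ii'] := eqVneq i i'.
  subst i'; move: (ci) (ci'); rewrite /in_blk => ci_ ci'_.
  by rewrite (F_ON ik) ?eqn_sub2rE ?mxE //; lia.
rewrite (orth_submx (Vorth ik i'k ii')) ?F_sub //;
  try by move: ci ci'; rewrite /in_blk; lia.
have /negbTE-> : c != c'.
  by apply: contra ii' => /eqP cc'; apply/eqP; apply: in_blk_inj ci _; rewrite cc'.
by rewrite mxE.
Qed.

Lemma stack_mx_mulB (B : 'M[C]_n) :
  (V 0 <= kermx B^T)%MS ->
  (forall i, (1 <= i <= k)%N -> (d i <= d i.-1)%N /\
     forall j, (j < d i)%N -> F i j *m B^T = sigma C d k i j *: F i.-1 j) ->
  stack_mx *m B^T = (normal_form C n k d)^T *m stack_mx.
Proof.
move=> V0B FB; apply/row_matrixP => c; rewrite !row_mul rowK [RHS]mulmx_sum_row.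
under eq_bigr do rewrite 2!mxE rowK.
have [i ik ci] := in_blk_ord c; rewrite (stack_rowE ik ci).
have [i0|i_gt0] := posnP i.
  subst i; rewrite normal_form_col0 //; apply/sub_kermxP; apply: submx_trans V0B.
  by apply: F_sub => //; move: ci; rewrite /in_blk; lia.
have iik : (1 <= i <= k)%N by rewrite i_gt0.
have [dd ->] := FB i iik; last by move: ci; rewrite /in_blk; lia.
have offi : blk_off d i = (blk_off d i.-1 + d i.-1)%N by rewrite -blk_offS prednK.
have offn : (blk_off d i.+1 <= n)%N by rewrite -blk_off_full leq_blk_off.
have r0n : (blk_off d i.-1 + (c - blk_off d i) < n)%N.
  by move: ci offn; rewrite /in_blk blk_offS; lia.
have r0i : in_blk d i.-1 (Ordinal r0n) by move: ci; rewrite /in_blk /=; lia.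
rewrite (normal_form_col _ iik ci r0i) // (stack_rowE _ r0i) //=; last by lia.
by rewrite addKn.
Qed.

End Stacking.

Unset Implicit Arguments.

Theorem proposition5p6 (R : realType) (n k : nat) (B : 'M[R[i]]_n)
  (V P : nat -> 'M[R[i]]_n) :
  (1 <= k)%N ->
  B *m (B *m mxadj B - mxadj B *m B) = - B ->
  B ^+ k != 0 -> B ^+ k.+1 = 0 ->
  (* orthogonal decomposition C^n = V_0 (+) ... (+) V_k *)
  (forall i j, (i <= k)%N -> (j <= k)%N -> i != j -> V i *m mxadj (V j) = 0) ->
  (\sum_(i < k.+1) V i == 1%:M)%MS ->
  (* P i is the orthogonal projection onto V_i *)
  (forall i, (i <= k)%N -> is_orth_proj (V i) (P i)) ->
  (* V_0 = ker B *)
  (V 0%N == kermx B^T)%MS ->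
  (* B(V_i) \subset V_(i-1) *)
  (forall i, (1 <= i <= k)%N -> (V i *m B^T <= V i.-1)%MS) ->
  (* E_i := Pr_{V_(i-1)} B |_{V_i}, written as P_(i-1) B P_i on all of C^n;
     E_i^* E_i - E_(i+1) E_(i+1)^* = Id_{V_i} for 1 <= i < k *)
  (forall i, (1 <= i < k)%N ->
     mxadj (P i.-1 *m B *m P i) *m (P i.-1 *m B *m P i)
     - (P i *m B *m P i.+1) *m mxadj (P i *m B *m P i.+1) = P i) ->
  (* E_k^* E_k = Id_{V_k} *)
  mxadj (P k.-1 *m B *m P k) *m (P k.-1 *m B *m P k) = P k ->
  exists U : 'M[R[i]]_n,
    [/\ mxadj U *m U = 1%:M,
        (* the basis (columns of U) is subordinate to the splitting *)
        (forall (i : nat) (c : 'I_n), (i <= k)%N ->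
           (blk_off (fun l => \rank (V l)) i <= c
              < blk_off (fun l => \rank (V l)) i + \rank (V i))%N ->
           ((col c U)^T <= V i)%MS) &
        mxadj U *m B *m U = normal_form (R[i]) n k (fun l => \rank (V l))].
Proof.
(* The commutator and nilpotency hypotheses only ensure that such a splitting
   exists; the normal form follows from the splitting alone. *)
move=> _ _ _ _ Vorth Vfull Pproj /andP[V0B _] BV EE_mid EE_top.
have [F [Fbasis FB]] := sigma_bases Pproj BV EE_mid EE_top.
have F_ON i : (i <= k)%N -> orthonormal_fam (\rank (V i)) (F i).
  by move=> ik; case: (Fbasis i ik).
have F_sub i j : (i <= k)%N -> (j < \rank (V i))%N -> (F i j <= V i)%MS.
  by move=> ik; case: (Fbasis i ik) => _ FV _; apply: FV.
have W_unitary := stack_mx_unitary Vorth Vfull F_ON F_sub.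
exists (stack_mx k V F)^T; split.
- by apply: mxadj_mul_unitary; rewrite trmxK.
- by move=> i c ik ci; rewrite tr_col trmxK rowK; apply: stack_row_sub.
apply: trmx_inj; rewrite !trmx_mul trmxK tr_mxadj -map_trmx -/(mxadj _) mulmxA.
by rewrite stack_mx_mulB // -mulmxA mxadjE (unitarymxP W_unitary) mulmx1.
Qed.
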